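(* Let $q>0$ and $r\ge 0$ be real numbers. For every integer $n\ge 0$, $$B_n^q(r)=\sum_{k=0}^n\frac{1}{q^k\,(k+1)}\sum_{j=0}^{k}(-1)^{j}\binom{k}{j}(r+jq)^n,$$ where $B_n^q(r)$ is as defined in the context.
   Context: The Bernoulli polynomials with a $q$ parameter $B_n^q(r)$ are defined by the formal power series identity in $t$ $$\sum_{n=0}^{\infty}B_n^q(r)\frac{t^n}{n!}=\frac{q\,e^{rt}}{1-e^{qt}}\sum_{k=1}^{\infty}\left(\frac{1-e^{qt}}{q}\right)^k\frac{1}{k}.$$ *)

From HB Require Import structures.
From mathcomp Require Import all_boot all_order all_algebra.
From mathcomp Require Import reals.
Set Implicit Arguments. Unset Strict Implicit. Unset Printing Implicit Defensive.
Import Order.TTheory GRing.Theory Num.Theory.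
Local Open Scope ring_scope.

Section FPS.
Variable R : fieldType.

Definition fps := nat -> R.

Definition fps_mul (f g : fps) : fps :=
  fun n => \sum_(i < n.+1) f i * g (n - i)%N.
Definition fps_scale (c : R) (f : fps) : fps := fun n => c * f n.
Definition fps_one : fps := fun n => if n is 0%N then 1 else 0.
Definition fps_sub (f g : fps) : fps := fun n => f n - g n.
Definition fps_exp (c : R) : fps := fun n => c ^+ n / (n`!)%:R.
Fixpoint fps_pow (f : fps) (k : nat) : fps :=
  if k is k'.+1 then fps_mul f (fps_pow f k') else fps_one.

(* sum_{k>=1} u^k / k, for u with zero constant term (so u^k has order >= k and
   the coefficient of t^n only involves k <= n) *)
Definition fps_logsum (u : fps) : fps :=
  fun n => \sum_(1 <= k < n.+1) fps_pow u k n / k%:R.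

Definition fps_divX (f : fps) : fps := fun n => f n.+1.

(* multiplicative inverse of a series with nonzero constant term *)
Fixpoint fps_inv_seq (f : fps) (n : nat) : seq R :=
  if n is n'.+1 then
    let s := fps_inv_seq f n' in
    rcons s (- (f 0%N)^-1 * \sum_(1 <= i < n.+1) f i * nth 0 s (n - i)%N)
  else [:: (f 0%N)^-1].
Definition fps_inv (f : fps) : fps := fun n => nth 0 (fps_inv_seq f n) n.

(* quotient N / D of two series both having zero constant term,
   computed as (N/t) * (D/t)^{-1} *)
Definition fps_div0 (N D : fps) : fps := fps_mul (fps_divX N) (fps_inv (fps_divX D)).
End FPS.

(* The generating function
   q e^{rt} / (1 - e^{qt}) * sum_{k>=1} ((1 - e^{qt})/q)^k / k *)
Definition Bq_egf (R : fieldType) (q r : R) : fps R :=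
  let D := fps_sub (fps_one R) (fps_exp q) in
  let u := fps_scale q^-1 D in
  fps_div0 (fps_mul (fps_scale q (fps_exp r)) (fps_logsum u)) D.

Definition Bq (R : fieldType) (q r : R) (n : nat) : R := (n`!)%:R * Bq_egf q r n.

From HB Require Import structures.
From mathcomp Require Import all_boot all_order all_algebra.
From mathcomp Require Import reals.
From mathcomp Require Import zify ring.
Import Order.TTheory GRing.Theory Num.Theory.
Local Open Scope ring_scope.

(* Modulo t^(n+1) formal power series become polynomials, so the ring laws of
   {poly R} are available. Write u = (1 - e^(qt))/q = t u'. The logarithmic sum
   is t u' S with S = sum_k u^k/(k+1), and q u' is the denominator divided by t,
   so the generating function reduces to e^(rt) S. Expanding
   u^k = q^-k (1 - e^(qt))^k binomially and using e^(rt) e^(jqt) = e^((r+jq)t)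
   gives [t^n] e^(rt) u^k = q^-k sum_j (-1)^j C(k,j) (r+jq)^n / n!. *)

Section Truncation.
Context {R : fieldType}.
Implicit Types (f g : fps R) (p s : {poly R}).

Definition trunc (N : nat) f : {poly R} := \poly_(i < N.+1) f i.

Definition eq_upto (N : nat) p s := forall i, (i <= N)%N -> p`_i = s`_i.

Lemma coef_trunc N f i : (i <= N)%N -> (trunc N f)`_i = f i.
Proof. by move=> le_iN; rewrite coef_poly ltnS le_iN. Qed.

Lemma eq_upto_refl N p : eq_upto N p p.
Proof. by []. Qed.

Lemma eq_upto_sym {N p s} : eq_upto N p s -> eq_upto N s p.
Proof. by move=> eps i le_iN; rewrite eps. Qed.

Lemma eq_upto_trans {N p s t} : eq_upto N p s -> eq_upto N s t -> eq_upto N p t.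
Proof. by move=> eps est i le_iN; rewrite eps ?est. Qed.

Lemma eq_uptoM {N p p' s s'} :
  eq_upto N p p' -> eq_upto N s s' -> eq_upto N (p * s) (p' * s').
Proof.
move=> epp ess i le_iN; rewrite !coefM; apply: eq_bigr => j _.
have lt_ji := ltn_ord j; rewrite epp ?ess //; lia.
Qed.

Lemma trunc_one N : trunc N (fps_one R) = 1.
Proof. by apply/polyP=> -[|i]; rewrite coef_poly coef1 //=; case: ifP. Qed.

Lemma trunc_sub N f g : trunc N (fps_sub f g) = trunc N f - trunc N g.
Proof. by apply/polyP=> i; rewrite coefB !coef_poly; case: ifP; rewrite ?subr0. Qed.

Lemma trunc_scale N c f : trunc N (fps_scale c f) = c *: trunc N f.
Proof. by apply/polyP=> i; rewrite coefZ !coef_poly; case: ifP; rewrite ?mulr0. Qed.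

Lemma trunc_mul N f g : eq_upto N (trunc N (fps_mul f g)) (trunc N f * trunc N g).
Proof.
move=> i le_iN; rewrite coef_trunc // coefM; apply: eq_bigr => j _.
have lt_ji := ltn_ord j; rewrite !coef_trunc //; lia.
Qed.

Lemma trunc_pow N f k : eq_upto N (trunc N (fps_pow f k)) (trunc N f ^+ k).
Proof.
elim: k => [|k IHk]; first by rewrite trunc_one.
rewrite exprS /=; exact: eq_upto_trans (trunc_mul _ _ _) (eq_uptoM (eq_upto_refl _ _) IHk).
Qed.

Lemma coef_mul_expr_eq0 p s k i : p`_0 = 0 -> (i < k)%N -> (s * p ^+ k)`_i = 0.
Proof.
move=> p0 lt_ik.
have take1_p : take_poly 1 p = 0 by apply/polyP=> -[|j]; rewrite coef_take_poly coef0 ?p0.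
have -> : p = drop_poly 1 p * 'X by rewrite -[LHS](poly_take_drop 1) take1_p add0r.
by rewrite exprMn mulrA coefMXn lt_ik.
Qed.

Lemma fps_mul_divXl f g m : f 0%N = 0 -> fps_mul f g m.+1 = fps_mul (fps_divX f) g m.
Proof. by move=> f0; rewrite /fps_mul big_ord_recl f0 mul0r add0r. Qed.

Lemma fps_mul_divXr f g m : g 0%N = 0 -> fps_mul f g m.+1 = fps_mul f (fps_divX g) m.
Proof.
move=> g0; rewrite /fps_mul big_ord_recr /= subnn g0 mulr0 addr0.
by apply: eq_bigr => i _; rewrite /fps_divX subSn // -ltnS.
Qed.

Lemma size_fps_inv_seq f n : size (fps_inv_seq f n) = n.+1.
Proof. by elim: n => //= n IHn; rewrite size_rcons IHn. Qed.

Lemma nth_fps_inv_seq f n i : (i <= n)%N -> nth 0 (fps_inv_seq f n) i = fps_inv f i.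
Proof.
elim: n => [|n IHn] le_in; first by move: le_in; rewrite leqn0 => /eqP->.
have [lt_in1 | ] := ltnP i n.+1; last by move=> le_n1i; have -> : i = n.+1 by lia.
by rewrite /= nth_rcons size_fps_inv_seq lt_in1 IHn.
Qed.

Lemma fps_invS f m :
  fps_inv f m.+1 = - (f 0%N)^-1 * \sum_(1 <= i < m.+2) f i * fps_inv f (m.+1 - i)%N.
Proof.
rewrite {1}/fps_inv /= nth_rcons size_fps_inv_seq ltnn eqxx.
congr (_ * _); apply: eq_big_nat => i /andP[lt0i le_im].
by rewrite nth_fps_inv_seq //; lia.
Qed.

Lemma fps_mulV f m : f 0%N != 0 -> fps_mul f (fps_inv f) m = fps_one R m.
Proof.
move=> f0; case: m => [|m].
  by rewrite /fps_mul big_ord1 /fps_inv /= mulfV.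
rewrite /fps_mul big_ord_recl subn0 fps_invS mulrA mulrN mulfV // mulN1r.
by rewrite big_add1 big_mkord addNr.
Qed.

Lemma trunc_div0 {n Nu De Q} : De 1%N != 0 ->
  eq_upto n (trunc n (fps_divX Nu)) (trunc n (fps_divX De) * Q) ->
  eq_upto n (trunc n (fps_div0 Nu De)) Q.
Proof.
move=> De1 eNu; set P := trunc n (fps_divX De); set V := trunc n (fps_inv (fps_divX De)).
have PV : eq_upto n (P * V) 1.
  apply: eq_upto_trans (eq_upto_sym (trunc_mul _ _ _)) _ => i le_in.
  by rewrite coef_trunc // fps_mulV // -(trunc_one n) coef_trunc.
apply: eq_upto_trans (trunc_mul _ _ _) _.
apply: eq_upto_trans (eq_uptoM eNu (eq_upto_refl _ V)) _.
rewrite mulrAC mulrC -[X in eq_upto _ _ X]mulr1.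
exact: eq_uptoM (eq_upto_refl _ _) PV.
Qed.

Lemma trunc_logsum n u : u 0%N = 0 ->
  eq_upto n (trunc n (fps_divX (fps_logsum u)))
    (trunc n (fps_divX u) * \sum_(k < n.+1) (k.+1%:R)^-1 *: trunc n u ^+ k).
Proof.
move=> u0 i le_in; rewrite coef_trunc // /fps_divX /fps_logsum big_add1 /=.
set U' := trunc n (fps_divX u); set U := trunc n u.
rewrite mulr_sumr coef_sum.
rewrite -(big_mkord xpredT (fun k => (U' * ((k.+1%:R)^-1 *: U ^+ k))`_i)).
rewrite [RHS](big_cat_nat _ (n := i.+1)) //= [X in _ = _ + X]big1_seq ?addr0 => [|k].
  apply: eq_big_nat => k /andP[_ lt_ki].
  rewrite -scalerAr coefZ mulrC fps_mul_divXl //; congr (_ * _).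
  have := trunc_mul n (fps_divX u) (fps_pow u k) i le_in.
  rewrite coef_trunc // => ->.
  exact: eq_uptoM (eq_upto_refl _ _) (trunc_pow _ _ _) _ le_in.
move=> /andP[_]; rewrite mem_index_iota => /andP[lt_ik _].
by rewrite -scalerAr coefZ coef_mul_expr_eq0 ?mulr0 // coef_trunc.
Qed.

End Truncation.

Section Exponential.
Context {R : fieldType}.
Hypothesis R0 : [pchar R] =i pred0.

Lemma natf_neq0 {m} : (0 < m)%N -> m%:R != 0 :> R.
Proof. by move=> m_gt0; rewrite (pcharf0P R).1 // -lt0n. Qed.

Lemma fps_mul_exp (a b : R) i : fps_mul (fps_exp a) (fps_exp b) i = fps_exp (a + b) i.
Proof.
rewrite /fps_mul /fps_exp addrC exprDn mulr_suml; apply: eq_bigr => j _.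
have le_ji : (j <= i)%N by rewrite -ltnS.
have jfact_neq0 := natf_neq0 (fact_gt0 j).
have ijfact_neq0 := natf_neq0 (fact_gt0 (i - j)).
have bin_neq0 : 'C(i, j)%:R != 0 :> R by rewrite natf_neq0 ?bin_gt0.
rewrite -mulr_natr -(bin_fact le_ji) !natrM; field.
by rewrite jfact_neq0 ijfact_neq0 bin_neq0.
Qed.

Lemma trunc_expD N (a b : R) :
  eq_upto N (trunc N (fps_exp a) * trunc N (fps_exp b)) (trunc N (fps_exp (a + b))).
Proof.
apply: eq_upto_trans (eq_upto_sym (trunc_mul _ _ _)) _ => i le_iN.
by rewrite !coef_trunc // fps_mul_exp.
Qed.

Lemma trunc_exp0 N : trunc N (fps_exp (0 : R)) = 1.
Proof.
rewrite -(trunc_one N); apply/polyP=> -[|i]; rewrite !coef_poly /fps_exp ?expr0n /=.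
  by rewrite divr1.
by case: ifP; rewrite ?mul0r.
Qed.

Lemma trunc_expX N (c : R) j :
  eq_upto N (trunc N (fps_exp c) ^+ j) (trunc N (fps_exp (j%:R * c))).
Proof.
elim: j => [|j IHj]; first by rewrite mul0r trunc_exp0.
rewrite exprS mulrSr mulrDl mul1r addrC.
exact: eq_upto_trans (eq_uptoM (eq_upto_refl _ _) IHj) (trunc_expD _ _ _).
Qed.

Lemma trunc_exp_diff N (a c : R) k :
  eq_upto N (trunc N (fps_exp a) * (1 - trunc N (fps_exp c)) ^+ k)
    (\sum_(j < k.+1) ((-1) ^+ j * 'C(k, j)%:R) *: trunc N (fps_exp (a + j%:R * c))).
Proof.
move=> i le_iN; rewrite exprBn mulr_sumr !coef_sum; apply: eq_bigr => j _.
have sign_polyC : (-1) ^+ j = ((-1) ^+ j)%:P :> {poly R} by rewrite polyC_exp polyCN.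
rewrite expr1n mulr1 sign_polyC [in LHS]mulrnAr coefMn mulrCA coefCM coefZ.
rewrite (eq_upto_trans (eq_uptoM (eq_upto_refl _ _) (trunc_expX _ _ _)) (trunc_expD _ _ _) _ le_iN).
by rewrite [RHS]mulrAC mulr_natr.
Qed.

End Exponential.

Section BernoulliQ.
Variables (R : fieldType) (q r : R).
Hypothesis q_neq0 : q != 0.

Let D := fps_sub (fps_one R) (fps_exp q).
Let u := fps_scale q^-1 D.

Lemma trunc_u n : trunc n u = q^-1 *: (1 - trunc n (fps_exp q)).
Proof. by rewrite trunc_scale trunc_sub trunc_one. Qed.

Lemma Bq_egf_trunc n : Bq_egf q r n =
  (trunc n (fps_exp r) * \sum_(k < n.+1) (k.+1%:R)^-1 *: trunc n u ^+ k)`_n.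
Proof.
have D0 : D 0%N = 0 by rewrite /D /fps_sub /fps_one /fps_exp expr0 divr1 subrr.
have u0 : u 0%N = 0 by rewrite /u /fps_scale D0 mulr0.
have D1 : D 1%N != 0 by rewrite /D /fps_sub /fps_one /fps_exp sub0r expr1 divr1 oppr_eq0.
rewrite -(coef_trunc n (Bq_egf q r) n (leqnn n)).
apply: (trunc_div0 D1 _ _ (leqnn n)) => i le_in.
rewrite coef_trunc // /fps_divX fps_mul_divXr; last by rewrite /fps_logsum big_geq.
have := trunc_mul n (fps_scale q (fps_exp r)) (fps_divX (fps_logsum u)) i le_in.
rewrite coef_trunc // => ->.
rewrite trunc_scale (eq_uptoM (eq_upto_refl _ _) (trunc_logsum n _ u0) _ le_in).
have -> : trunc n (fps_divX u) = q^-1 *: trunc n (fps_divX D) by rewrite -trunc_scale.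
by rewrite -!scalerAl -scalerAr scalerA mulfV // scale1r mulrCA.
Qed.

Hypothesis R0 : [pchar R] =i pred0.

Lemma Bq_sum_binomial n : Bq q r n =
  \sum_(k < n.+1) (q ^+ k * (k.+1)%:R)^-1 *
     \sum_(j < k.+1) (-1) ^+ j * ('C(k, j))%:R * (r + j%:R * q) ^+ n.
Proof.
rewrite /Bq Bq_egf_trunc trunc_u mulr_sumr coef_sum mulr_sumr; apply: eq_bigr => k _.
rewrite exprZn -!scalerAr !coefZ (trunc_exp_diff R0 n r q k n (leqnn n)) coef_sum !mulr_sumr.
apply: eq_bigr => j _; rewrite coefZ coef_trunc // /fps_exp exprVn.
have nfact_neq0 := natf_neq0 R0 (fact_gt0 n).
have k1_neq0 := natf_neq0 R0 (ltn0Sn k).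
field; by rewrite nat1r k1_neq0 expf_neq0 // nfact_neq0.
Qed.

End BernoulliQ.

Theorem mainTheorem3 (R : realType) (q r : R) (hq : 0 < q) (hr : 0 <= r) (n : nat) :
  Bq q r n =
  \sum_(k < n.+1) (q ^+ k * (k.+1)%:R)^-1 *
     \sum_(j < k.+1) (-1) ^+ j * ('C(k, j))%:R * (r + j%:R * q) ^+ n.
Proof.
exact: (Bq_sum_binomial _ _ _ (lt0r_neq0 hq) (@pchar_num R) n).
Qed.
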